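(* Let $p\in(1,\infty)$, $q=p/(p-1)$, $R_0\in\mathbb{R}^{\mathcal{S}\times\mathcal{A}}$, $\alpha>0$ and $\mathcal{R}_p=\{R:\|R-R_0\|_p\le\alpha\}$. For every stationary policy $\pi\in\Pi$ and every $(s,a)\in\mathcal{S}\times\mathcal{A}$, $$Q^\pi_{\mathcal{R}_p}(s,a)=R_0(s,a)+\gamma\sum_{s'}P(s'|s,a)\,v^\pi_{\mathcal{R}_p}(s')-\alpha\left(\frac{d^\pi(s,a)}{\|d^\pi\|_q}\right)^{q-1}.$$
   Context: Finite MDP with finite state space $\mathcal{S}$, finite action space $\mathcal{A}$, transition kernel $P$, discount $\gamma\in[0,1)$, initial distribution $\mu$ with $\mu(s)>0$ for all $s$. $\Pi$: stationary randomized policies, $\pi_s(a)=\pi(a|s)$; $R^\pi(s)=\sum_a\pi_s(a)R(s,a)$, $P^\pi(s'|s)=\sum_a\pi_s(a)P(s'|s,a)$; $v^\pi_R=(I-\gamma P^\pi)^{-1}R^\pi$ and $Q^\pi_R(s,a)=R(s,a)+\gamma\sum_{s'}P(s'|s,a)v^\pi_R(s')$. Occupancy: $d^\pi=\mu^\top(I-\gamma P^\pi)^{-1}$, $d^\pi(s,a)=d^\pi(s)\pi_s(a)$, $\|d^\pi\|_q$ the $L_q$ norm over $\mathcal{S}\times\mathcal{A}$. Return $\rho^\pi_R=\sum_{s,a}d^\pi(s,a)R(s,a)$. $R^\pi_p$ is the (unique) minimizer of $R\mapsto\rho^\pi_R$ over $\mathcal{R}_p$; $v^\pi_{\mathcal{R}_p}:=v^\pi_{R^\pi_p}$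 and $Q^\pi_{\mathcal{R}_p}:=Q^\pi_{R^\pi_p}$. *)

From HB Require Import structures.
From mathcomp Require Import all_boot all_order all_algebra.
From mathcomp Require Import all_classical all_reals exp.
Set Implicit Arguments. Unset Strict Implicit. Unset Printing Implicit Defensive.
Import Order.TTheory GRing.Theory Num.Theory.
Local Open Scope ring_scope.

(* Finite MDP: states 'I_n, actions 'I_m.
   Transition kernel P s a s' = P(s'|s,a); policy pi : 'M_(n,m), pi s a = pi(a|s);
   rewards R : 'M_(n,m); initial distribution mu : 'rV_n. *)

Definition Ppi (R : realType) (n m : nat) (P : 'I_n -> 'I_m -> 'I_n -> R)
  (pi : 'M[R]_(n, m)) : 'M[R]_n :=
  \matrix_(s, s') \sum_(a < m) pi s a * P s a s'.

Definition Rpi (R : realType) (n m : nat) (pi Rw : 'M[R]_(n, m)) : 'cV[R]_n :=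
  \col_s \sum_(a < m) pi s a * Rw s a.

Definition vpi (R : realType) (n m : nat) (P : 'I_n -> 'I_m -> 'I_n -> R)
  (gamma : R) (pi Rw : 'M[R]_(n, m)) : 'cV[R]_n :=
  invmx (1%:M - gamma *: Ppi P pi) *m Rpi pi Rw.

Definition Qpi (R : realType) (n m : nat) (P : 'I_n -> 'I_m -> 'I_n -> R)
  (gamma : R) (pi Rw : 'M[R]_(n, m)) (s : 'I_n) (a : 'I_m) : R :=
  Rw s a + gamma * \sum_(s' < n) P s a s' * vpi P gamma pi Rw s' 0.

Definition dS (R : realType) (n m : nat) (P : 'I_n -> 'I_m -> 'I_n -> R)
  (gamma : R) (mu : 'rV[R]_n) (pi : 'M[R]_(n, m)) : 'rV[R]_n :=
  mu *m invmx (1%:M - gamma *: Ppi P pi).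

Definition dSA (R : realType) (n m : nat) (P : 'I_n -> 'I_m -> 'I_n -> R)
  (gamma : R) (mu : 'rV[R]_n) (pi : 'M[R]_(n, m)) : 'M[R]_(n, m) :=
  \matrix_(s, a) (dS P gamma mu pi 0 s * pi s a).

Definition Lpnorm (R : realType) (n m : nat) (p : R) (f : 'M[R]_(n, m)) : R :=
  (\sum_(s < n) \sum_(a < m) `|f s a| `^ p) `^ p^-1.

Definition rho (R : realType) (n m : nat) (P : 'I_n -> 'I_m -> 'I_n -> R)
  (gamma : R) (mu : 'rV[R]_n) (pi Rw : 'M[R]_(n, m)) : R :=
  \sum_(s < n) \sum_(a < m) dSA P gamma mu pi s a * Rw s a.

Definition Rball (R : realType) (n m : nat) (p alpha : R) (R0 : 'M[R]_(n, m))
  : set 'M[R]_(n, m) :=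
  [set Rw | Lpnorm p (Rw - R0) <= alpha].

Definition is_worst_reward (R : realType) (n m : nat) (P : 'I_n -> 'I_m -> 'I_n -> R)
  (gamma : R) (mu : 'rV[R]_n) (pi : 'M[R]_(n, m)) (p alpha : R) (R0 : 'M[R]_(n, m))
  (Rw : 'M[R]_(n, m)) : Prop :=
  Rball p alpha R0 Rw /\
  forall Rw', Rball p alpha R0 Rw' -> rho P gamma mu pi Rw <= rho P gamma mu pi Rw'.

(* R^pi_p : the minimizer of R |-> rho^pi_R over R_p (chosen by xget; the
   default R0 is only used if no minimizer existed, which does not happen). *)
Definition Rworst (R : realType) (n m : nat) (P : 'I_n -> 'I_m -> 'I_n -> R)
  (gamma : R) (mu : 'rV[R]_n) (pi : 'M[R]_(n, m)) (p alpha : R) (R0 : 'M[R]_(n, m))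
  : 'M[R]_(n, m) :=
  xget R0 (is_worst_reward P gamma mu pi p alpha R0).

(* Only the reward term of Q^pi distinguishes the two sides, so everything
   reduces to computing the worst reward R^pi_p.  The return rho^pi_R is the
   linear functional R |-> <d, R> of the occupancy d = d^pi, and Hoelder's
   inequality gives <d, R> >= <d, R0> - alpha ||d||_q on the ball ||R - R0||_p
   <= alpha; by the equality case of Young's inequality (strict convexity of
   exp) equality holds exactly at R = R0 - alpha (d / ||d||_q)^(q-1), which is
   therefore the unique minimiser.  This needs d >= 0 and d <> 0: the
   minimum principle for the stochastic matrix P^pi makes (I - gamma P^pi)^-1
   entrywise nonnegative, whence d = mu + gamma d P^pi >= mu > 0. *)

From mathcomp Require Import all_boot all_order all_algebra.
From mathcomp Require Import all_classical all_reals exp sequences.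
From mathcomp Require Import ring lra.

Set Implicit Arguments.
Unset Strict Implicit.
Unset Printing Implicit Defensive.

Import Order.TTheory GRing.Theory Num.Theory.
Local Open Scope ring_scope.

Section LpBall.
Variable R : realType.

Lemma expR_convex_eq (l u v : R) : 0 < l < 1 ->
  l * expR u + (1 - l) * expR v <= expR (l * u + (1 - l) * v) -> u = v.
Proof.
move=> /andP[l_gt0 l_lt1] le_conv; apply/eqP; apply: contraLR le_conv => neq_uv.
rewrite -ltNge; set c := l * u + (1 - l) * v.
have tangent w : expR c * (1 + (w - c)) <= expR w ?= iff (w == c).
  have -> : expR w = expR c * expR (w - c) by rewrite -expRD addrC subrK.
  apply/leifP; case: eqP => [->|/eqP neq_wc].
    by rewrite subrr addr0 expR0 mulr1.
  by rewrite ltr_pM2l ?expR_gt0 // expR_gt1Dx // subr_eq0.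
have neq_uc : u != c.
  apply: contra neq_uv => /eqP eq_uc.
  have : u - c = (1 - l) * (u - v) by rewrite /c; ring.
  rewrite {1}eq_uc subrr => /esym/eqP.
  by rewrite mulf_eq0 subr_eq0 eq_sym lt_eqF //= subr_eq0.
have -> : expR c = l * (expR c * (1 + (u - c))) + (1 - l) * (expR c * (1 + (v - c))).
  by rewrite /c; ring.
apply: ltr_leD; first by rewrite ltr_pM2l // (lt_leif (tangent u)) neq_uc.
by rewrite ler_pM2l ?subr_gt0 // (tangent v).
Qed.

Lemma powR_div (x y r : R) : 0 <= x -> 0 <= y -> (x / y) `^ r = x `^ r / y `^ r.
Proof.
move=> x_ge0 y_ge0; rewrite powRM ?invr_ge0 //.
by rewrite -powR_inv1 // -powRrM mulN1r powRN.
Qed.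

Section Lpnorm.
Variables (n m : nat) (r : R).

Lemma Lpnorm_powR (f : 'M[R]_(n, m)) : r != 0 ->
  Lpnorm r f `^ r = \sum_i \sum_j `|f i j| `^ r.
Proof.
move=> r_neq0; rewrite /Lpnorm -powRrM mulVf // powRr1 //.
by apply: sumr_ge0 => i _; apply: sumr_ge0 => j _; apply: powR_ge0.
Qed.

Lemma Lpnorm_gt0 (f : 'M[R]_(n, m)) i j : f i j != 0 -> 0 < Lpnorm r f.
Proof.
move=> fij_neq0; apply: powR_gt0; rewrite (bigD1 i) //= (bigD1 j) //= -addrA.
apply: ltr_pwDl; first by rewrite powR_gt0 // normr_gt0.
apply: addr_ge0; first by apply: sumr_ge0 => k _; apply: powR_ge0.
by apply: sumr_ge0 => k _; apply: sumr_ge0 => l _; apply: powR_ge0.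
Qed.

Lemma sum_powR_div_Lpnorm (f : 'M[R]_(n, m)) : r != 0 -> 0 < Lpnorm r f ->
  \sum_i \sum_j (`|f i j| / Lpnorm r f) `^ r = 1.
Proof.
move=> r_neq0 f_gt0.
transitivity ((\sum_i \sum_j `|f i j| `^ r) / Lpnorm r f `^ r).
  rewrite mulr_suml; apply: eq_bigr => i _; rewrite mulr_suml.
  by apply: eq_bigr => j _; rewrite powR_div // ltW.
by rewrite -Lpnorm_powR // mulfV // lt0r_neq0 // powR_gt0.
Qed.

End Lpnorm.

Definition mxdot n m (d w : 'M[R]_(n, m)) : R := \sum_i \sum_j d i j * w i j.

Definition Rball_minimizer n m (q alpha : R) (R0 d : 'M[R]_(n, m)) :=
  \matrix_(i, j) (R0 i j - alpha * (d i j / Lpnorm q d) `^ (q - 1)).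

Section ConjugateExponents.
Variables p q : R.
Hypothesis p_gt1 : 1 < p.
Hypothesis conj_pq : p^-1 + q^-1 = 1.

Let p_gt0 : 0 < p. Proof. exact: lt_trans ltr01 p_gt1. Qed.

Let invq : q^-1 = 1 - p^-1.
Proof. by rewrite -conj_pq addrAC subrr add0r. Qed.

Let q_gt0 : 0 < q.
Proof. by rewrite -invr_gt0 invq subr_gt0 invf_lt1. Qed.

Let q_gt1 : 1 < q.
Proof. by rewrite -invf_lt1 // invq gtrBl invr_gt0. Qed.

Let q_sub1_mul_p : (q - 1) * p = q.
Proof.
by rewrite -[q]invrK invq; field; rewrite !gt_eqF ?subr_gt0.
Qed.

Lemma young_eq (x y : R) : 0 < x -> 0 < y ->
  x `^ q / q + y `^ p / p <= x * y -> y = x `^ (q - 1).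
Proof.
move=> x_gt0 y_gt0 le_xy.
have l01 : 0 < q^-1 < 1 by rewrite invr_gt0 q_gt0 invf_lt1.
have invp : 1 - q^-1 = p^-1 by rewrite -conj_pq addrK.
have ln_eq : q * ln x = p * ln y.
  apply: (@expR_convex_eq _ _ _ l01).
  rewrite invp !mulrA !mulVf ?gt_eqF // !mul1r expRD !lnK ?posrE //.
  by rewrite [q^-1 * _]mulrC [p^-1 * _]mulrC; move: le_xy; rewrite /powR !gt_eqF.
rewrite /powR gt_eqF // -[y]lnK ?posrE //; congr expR.
by apply: (mulfI (lt0r_neq0 p_gt0)); rewrite mulrA [p * (q - 1)]mulrC q_sub1_mul_p.
Qed.

Lemma young_leif (x y : R) : 0 <= x ->
  x * y <= x `^ q / q + `|y| `^ p / p ?= iff (y == x `^ (q - 1)).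
Proof.
move=> x_ge0; apply/leifP; case: eqP => [->|neq_y].
  rewrite mulr_powRB1 // ger0_norm ?powR_ge0 // -powRrM q_sub1_mul_p.
  by rewrite -mulrDr addrC conj_pq mulr1.
have young : x * y <= x `^ q / q + `|y| `^ p / p.
  apply: le_trans (conjugate_powR x_ge0 (normr_ge0 y) q_gt0 p_gt0 _).
    by rewrite ler_wpM2l // real_ler_norm ?num_real.
  by rewrite addrC.
rewrite lt_neqAle young andbT; apply/eqP => eq_xy; apply: neq_y.
move: x_ge0; rewrite le_eqVlt => /predU1P[x0|x_gt0].
  move/eqP: eq_xy; rewrite -x0 mul0r (powR0 (lt0r_neq0 q_gt0)) mul0r add0r eq_sym.
  rewrite mulf_eq0 invr_eq0 (gt_eqF p_gt0) orbF powR_eq0 normr_eq0 => /andP[/eqP -> _].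
  by rewrite powR0 // subr_eq0 gt_eqF.
have [y_le0|y_gt0] := leP y 0.
  suff : x * y < x `^ q / q + `|y| `^ p / p by rewrite eq_xy ltxx.
  apply: (@le_lt_trans _ _ 0); first by rewrite pmulr_rle0.
  by rewrite ltr_pwDl ?divr_gt0 ?divr_ge0 ?powR_gt0 ?powR_ge0 ?ltW.
by apply: young_eq; rewrite ?gtr0_norm // in eq_xy *; rewrite eq_xy.
Qed.

Lemma holder_leif (T : finType) (x y : T -> R) :
  (forall k, 0 <= x k) -> \sum_k x k `^ q = 1 -> \sum_k `|y k| `^ p <= 1 ->
  \sum_k x k * y k <= 1 ?= iff [forall k, y k == x k `^ (q - 1)].
Proof.
move=> x_ge0 sum_xq sum_yp.
have young := leif_sum (P := predT) (fun k _ => young_leif (y k) (x_ge0 k)).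
have young_le1 : \sum_k (x k `^ q / q + `|y k| `^ p / p) <= 1.
  rewrite big_split /= -!mulr_suml sum_xq mul1r -conj_pq addrC lerD2r.
  by rewrite -[leRHS]mul1r ler_wpM2r // invr_ge0 ltW.
apply/leifP; case: ifPn => [/forallP eq_y | neq_y].
  apply/eqP; rewrite -sum_xq; apply: eq_bigr => k _.
  by rewrite (eqP (eq_y k)) mulr_powRB1.
by apply: lt_le_trans young_le1; rewrite (lt_leif young).
Qed.

Section Ball.
Variables (n m : nat) (alpha : R) (R0 d : 'M[R]_(n, m)).
Hypotheses (alpha_gt0 : 0 < alpha) (d_ge0 : forall i j, 0 <= d i j).
Hypothesis d_gt0 : 0 < Lpnorm q d.

Lemma Rball_min_leif w : Rball p alpha R0 w ->
  mxdot d R0 - alpha * Lpnorm q d <= mxdot d w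
    ?= iff (w == Rball_minimizer q alpha R0 d).
Proof.
move=> w_in; set L := Lpnorm q d.
pose x k := d k.1 k.2 / L; pose y k := (R0 k.1 k.2 - w k.1 k.2) / alpha.
have x_ge0 k : 0 <= x k by rewrite divr_ge0 // ltW.
have sum_xq : \sum_k x k `^ q = 1.
  rewrite -(sum_powR_div_Lpnorm (lt0r_neq0 q_gt0) d_gt0) pair_bigA.
  by apply: eq_bigr => k _; rewrite ger0_norm.
have sum_yp : \sum_k `|y k| `^ p <= 1.
  have w_le : \sum_i \sum_j `|(w - R0) i j| `^ p <= alpha `^ p.
    by rewrite -Lpnorm_powR ?lt0r_neq0 // ge0_ler_powR ?nnegrE ?powR_ge0 // ltW.
  have -> : \sum_k `|y k| `^ p = (\sum_i \sum_j `|(w - R0) i j| `^ p) / alpha `^ p.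
    rewrite pair_bigA mulr_suml; apply: eq_bigr => k _.
    rewrite /y normrM normfV (gtr0_norm alpha_gt0).
    rewrite powR_div ?normr_ge0 ?(ltW alpha_gt0) //.
    by rewrite !mxE -normrN opprB.
  by rewrite ler_pdivrMr ?powR_gt0 // mul1r.
have dot_w : mxdot d w = mxdot d R0 - alpha * L * \sum_k x k * y k.
  rewrite /mxdot !pair_bigA mulr_sumr -sumrB; apply: eq_bigr => k _.
  by rewrite /x /y; field; rewrite !lt0r_neq0.
have minimizer_eq :
    (w == Rball_minimizer q alpha R0 d) = [forall k, y k == x k `^ (q - 1)].
  apply/eqP/forallP => [w_eq k | eq_y].
    by rewrite /y w_eq !mxE subKr mulrC mulKf ?lt0r_neq0.
  apply/matrixP => i j; rewrite mxE; move/eqP: (eq_y (i, j)); rewrite /x /y /= => <-.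
  by field; rewrite lt0r_neq0.
have f_nmono : {mono (fun t => mxdot d R0 - alpha * L * t) : a b /~ a <= b}.
  by move=> a b; rewrite lerD2l lerN2 ler_pM2l // mulr_gt0.
rewrite dot_w minimizer_eq -[in mxdot d R0 - alpha * L](mulr1 (alpha * L)).
by rewrite (nmono_leif f_nmono); apply: holder_leif x_ge0 sum_xq sum_yp.
Qed.

Lemma Rball_minimizer_mem : Rball p alpha R0 (Rball_minimizer q alpha R0 d).
Proof.
have sum_p : \sum_i \sum_j `|(Rball_minimizer q alpha R0 d - R0) i j| `^ p
    = alpha `^ p * \sum_i \sum_j (`|d i j| / Lpnorm q d) `^ q.
  rewrite mulr_sumr; apply: eq_bigr => i _; rewrite mulr_sumr; apply: eq_bigr => j _.
  rewrite !mxE addrAC subrr add0r normrN normrM (gtr0_norm alpha_gt0).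
  rewrite ger0_norm ?powR_ge0 // [(alpha * _) `^ p]powRM ?powR_ge0 ?(ltW alpha_gt0) //.
  by rewrite -powRrM q_sub1_mul_p ger0_norm.
rewrite /Rball /= /Lpnorm sum_p sum_powR_div_Lpnorm ?lt0r_neq0 // mulr1.
by rewrite -powRrM mulfV ?lt0r_neq0 // powRr1 // ltW.
Qed.

End Ball.

Lemma rhoE n m (P : 'I_n -> 'I_m -> 'I_n -> R) gamma mu pi (w : 'M[R]_(n, m)) :
  rho P gamma mu pi w = mxdot (dSA P gamma mu pi) w.
Proof. by []. Qed.

Lemma Rworst_Rball_minimizer n m (P : 'I_n -> 'I_m -> 'I_n -> R) gamma mu pi
    alpha (R0 : 'M[R]_(n, m)) (d := dSA P gamma mu pi) :
  0 < alpha -> (forall s a, 0 <= d s a) -> 0 < Lpnorm q d ->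
  Rworst P gamma mu pi p alpha R0 = Rball_minimizer q alpha R0 d.
Proof.
move=> alpha_gt0 d_ge0 d_gt0.
have min_leif := Rball_min_leif (R0 := R0) alpha_gt0 d_ge0 d_gt0.
have min_mem := Rball_minimizer_mem R0 alpha_gt0 d_ge0 d_gt0.
have min_val : mxdot d (Rball_minimizer q alpha R0 d) = mxdot d R0 - alpha * Lpnorm q d.
  by apply/esym/eqP; rewrite (min_leif _ min_mem).2.
apply: xget_unique.
  split=> // w w_in; rewrite !rhoE -/d min_val; exact: (min_leif w w_in).1.
move=> w [w_in w_min]; apply/eqP; rewrite -(ge_leif (min_leif w w_in)) -min_val.
by have := w_min _ min_mem; rewrite !rhoE.
Qed.

End ConjugateExponents.
End LpBall.

Section DiscountedStochastic.
Variables (R : realType) (n : nat) (A : 'M[R]_n) (gamma : R).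
Hypotheses (A_ge0 : forall i j, 0 <= A i j) (A_sum1 : forall i, \sum_j A i j = 1).
Hypotheses (gamma_ge0 : 0 <= gamma) (gamma_lt1 : gamma < 1).

Lemma discounted_fixpoint_ge0 (b x : 'cV[R]_n) :
  (forall i, 0 <= b i 0) -> x = b + gamma *: (A *m x) -> forall i, 0 <= x i 0.
Proof.
move=> b_ge0 x_fix i.
(* minimum principle: at a minimising index k, (1 - gamma) x_k >= b_k *)
have [k _ k_min] := arg_minP (fun j => x j 0) (isT : predT i).
suff : 0 <= x k 0 by move/le_trans; apply; apply: k_min.
have x_k : x k 0 = b k 0 + gamma * \sum_j A k j * x j 0 by rewrite {1}x_fix !mxE.
have : gamma * x k 0 <= gamma * \sum_j A k j * x j 0.
  rewrite ler_wpM2l // -[x k 0]mul1r -(A_sum1 k) mulr_suml.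
  by apply: ler_sum => j _; apply: ler_wpM2l; [exact: A_ge0 | exact: k_min].
have gamma_lt1' : 0 < 1 - gamma by rewrite subr_gt0.
rewrite -(pmulr_rge0 _ gamma_lt1'); have := b_ge0 k; lra.
Qed.

Lemma unitmx_discounted : (1%:M - gamma *: A) \in unitmx.
Proof.
rewrite -unitmx_tr -row_free_unit; apply/inj_row_free => v v_ker.
have x_fix : v^T = 0 + gamma *: (A *m v^T).
  have := congr1 trmx v_ker; rewrite trmx_mul trmxK trmx0 mulmxBl mul1mx.
  by rewrite -scalemxAl add0r => /subr0_eq.
have Nx_fix : - v^T = 0 + gamma *: (A *m - v^T).
  by rewrite mulmxN scalerN add0r {1}x_fix add0r.
have b0 i : 0 <= (0 : 'cV[R]_n) i 0 by rewrite mxE.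
apply/rowP => j; apply/eqP; rewrite mxE eq_le.
have := discounted_fixpoint_ge0 b0 Nx_fix j; have := discounted_fixpoint_ge0 b0 x_fix j.
by rewrite !mxE oppr_ge0 => -> ->.
Qed.

Lemma invmx_discounted_ge0 i j : 0 <= invmx (1%:M - gamma *: A) i j.
Proof.
set M := 1%:M - gamma *: A; pose x : 'cV[R]_n := invmx M *m delta_mx j 0.
have x_fix : x = delta_mx j 0 + gamma *: (A *m x).
  have : M *m x = delta_mx j 0 by rewrite mulmxA (mulmxV unitmx_discounted) mul1mx.
  by rewrite mulmxBl mul1mx -scalemxAl => <-; rewrite subrK.
have delta_ge0 k : 0 <= (delta_mx j 0 : 'cV[R]_n) k 0 by rewrite mxE ler0n.
by have := discounted_fixpoint_ge0 delta_ge0 x_fix i; rewrite /x -colE mxE.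
Qed.

End DiscountedStochastic.

Section Occupancy.
Variables (R : realType) (n m : nat) (P : 'I_n -> 'I_m -> 'I_n -> R).
Variables (gamma : R) (mu : 'rV[R]_n) (pi : 'M[R]_(n, m)).
Hypotheses (P_ge0 : forall s a s', 0 <= P s a s').
Hypothesis P_sum1 : forall s a, \sum_s' P s a s' = 1.
Hypotheses (gamma_ge0 : 0 <= gamma) (gamma_lt1 : gamma < 1).
Hypotheses (pi_ge0 : forall s a, 0 <= pi s a) (pi_sum1 : forall s, \sum_a pi s a = 1).
Hypothesis mu_ge0 : forall s, 0 <= mu 0 s.

Lemma Ppi_ge0 s s' : 0 <= Ppi P pi s s'.
Proof. by rewrite mxE; apply: sumr_ge0 => a _; apply: mulr_ge0. Qed.

Lemma Ppi_sum1 s : \sum_s' Ppi P pi s s' = 1.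
Proof.
under eq_bigr do rewrite mxE.
rewrite exchange_big -(pi_sum1 s); apply: eq_bigr => a _.
by rewrite -mulr_sumr P_sum1 mulr1.
Qed.

Lemma dS_ge_mu s : mu 0 s <= dS P gamma mu pi 0 s.
Proof.
have dS_ge0 s' : 0 <= dS P gamma mu pi 0 s'.
  rewrite mxE; apply: sumr_ge0 => k _; apply: mulr_ge0 => //.
  exact: invmx_discounted_ge0 Ppi_ge0 Ppi_sum1 gamma_ge0 gamma_lt1 k s'.
set D := dS P gamma mu pi.
have dS_fix : D = mu + gamma *: (D *m Ppi P pi).
  have : D *m (1%:M - gamma *: Ppi P pi) = mu.
    have M_unit := unitmx_discounted Ppi_ge0 Ppi_sum1 gamma_ge0 gamma_lt1.
    by rewrite /D /dS -mulmxA (mulVmx M_unit) mulmx1.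
  by rewrite mulmxBr mulmx1 -scalemxAr => <-; rewrite subrK.
rewrite dS_fix !mxE lerDl; apply: mulr_ge0 => //; apply: sumr_ge0 => k _.
by rewrite mulr_ge0 ?Ppi_ge0.
Qed.

Lemma dSA_ge0 s a : 0 <= dSA P gamma mu pi s a.
Proof. by rewrite mxE mulr_ge0 // (le_trans (mu_ge0 s)) ?dS_ge_mu. Qed.

Lemma sum_dSA s : \sum_a dSA P gamma mu pi s a = dS P gamma mu pi 0 s.
Proof. by under eq_bigr do rewrite mxE; rewrite -mulr_sumr pi_sum1 mulr1. Qed.

End Occupancy.

Theorem corollary2 (R : realType) (n m : nat)
  (P : 'I_n -> 'I_m -> 'I_n -> R) (gamma : R) (mu : 'rV[R]_n)
  (hP0 : forall s a s', 0 <= P s a s')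
  (hP1 : forall s a, \sum_(s' < n) P s a s' = 1)
  (hg0 : 0 <= gamma) (hg1 : gamma < 1)
  (hmu0 : forall s, 0 < mu 0 s) (hmu1 : \sum_(s < n) mu 0 s = 1)
  (p : R) (hp : 1 < p) (R0 : 'M[R]_(n, m)) (alpha : R) (halpha : 0 < alpha)
  (pi : 'M[R]_(n, m))
  (hpi0 : forall s a, 0 <= pi s a) (hpi1 : forall s, \sum_(a < m) pi s a = 1)
  (s : 'I_n) (a : 'I_m) :
  let q := p / (p - 1) in
  let Rp := Rworst P gamma mu pi p alpha R0 in
  let d := dSA P gamma mu pi in
  Qpi P gamma pi Rp s a =
    R0 s a + gamma * \sum_(s' < n) P s a s' * vpi P gamma pi Rp s' 0
    - alpha * (d s a / Lpnorm q d) `^ (q - 1).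
Proof.
move=> q Rp d.
have conj_pq : p^-1 + q^-1 = 1.
  by rewrite /q invf_div; field; rewrite lt0r_neq0 // (lt_trans ltr01).
have mu_ge0 s' : 0 <= mu 0 s' by apply: ltW.
have d_ge0 := dSA_ge0 hP0 hP1 hg0 hg1 hpi0 hpi1 mu_ge0.
have [a' /andP[_ d_sa'_gt0]] : exists a', true && (0 < d s a').
  apply: psumr_neq0P => [a' _|]; first exact: d_ge0.
  rewrite sum_dSA //; apply/eqP; rewrite gt_eqF // (lt_le_trans (hmu0 s)) //.
  exact: dS_ge_mu.
have d_gt0 : 0 < Lpnorm q d := Lpnorm_gt0 q (lt0r_neq0 d_sa'_gt0).
by rewrite /Rp (Rworst_Rball_minimizer hp conj_pq R0 halpha d_ge0 d_gt0) /Qpi mxE; ring.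
Qed.
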